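(* Let $p,\sigma,\bar\theta>0$, let $E:[0,\infty)\to\mathbb R$ be continuous with $|E(t)|\le Ce^{-ct}$ for some $C,c>0$, and let $y:[0,\infty)\to[0,\infty)$ be a non-negative $C^1$ solution of $$\dot y=p\sigma\,y(\bar\theta-y)+E(t).$$ Then either $y(t)\to0$ as $t\to\infty$, or there exist $C',\delta>0$ such that $|y(t)-\bar\theta|\le C'e^{-\delta t}$ for all $t\ge0$. *)

From Stdlib Require Import Reals.
From Coquelicot Require Import Coquelicot.
Open Scope R_scope.

Definition has_deriv_halfline (f : R -> R) (t d : R) : Prop :=
  limit1_in (fun s => (f s - f t) / (s - t)) (fun s => 0 <= s /\ s <> t) d t.

Definition cont_halfline (f : R -> R) (t : R) : Prop :=
  limit1_in f (fun s => 0 <= s) (f t) t.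

From Stdlib Require Import Reals Lra Classical.
From Coquelicot Require Import Coquelicot.
Open Scope R_scope.

(* The only tool is a comparison (barrier) principle: if y solves y' = F on
   [0, +oo) and w is a smooth function with y(t0) <= w(t0) and F <= w'
   wherever y > w, then y <= w afterwards (and symmetrically from below).
   It is proved from a last-crossing-time argument and the mean value theorem,
   after relating the one-sided derivative to ordinary derivatives.

   Applied with barriers built from thetabar, C/c e^(-ct) and A e^(-delta t):
   - y is bounded above (barrier M - C/c e^(-ct));
   - if y does not tend to 0, it exceeds some e0 > 0 at arbitrarily late
     times, hence stays above a constant K > 0 from some time t1 on
     (barrier K + C/c e^(-ct), valid below thetabar);
   - once y >= K, the tube thetabar -/+ A e^(-delta t) with
     delta = min(c, p sigma K / 2) is invariant, giving exponential
     convergence after t1, which extends to [0, +oo) by boundedness. *)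

Definition right_cont (f : R -> R) (t0 : R) : Prop :=
  forall eps, 0 < eps -> exists del, 0 < del /\
    forall s, t0 <= s < t0 + del -> Rabs (f s - f t0) < eps.

Lemma right_cont_of_continuity (f : R -> R) (t : R) :
  continuity_pt f t -> right_cont f t.
Proof.
  intros Hf eps Heps. destruct (Hf eps Heps) as [alp [Halp Hnear]].
  exists alp; split; [lra|]. intros s Hs.
  destruct (Req_dec s t) as [->|Hne].
  - rewrite Rminus_eq_0, Rabs_R0; lra.
  - apply (Hnear s). split; [split; [exact I| auto]|].
    simpl; unfold R_dist. rewrite Rabs_right; lra.
Qed.

Lemma right_cont_lin_comb (f h : R -> R) (k t : R) :
  right_cont f t -> continuity_pt h t -> right_cont (fun s => k * f s + h s) t.
Proof.
  intros Hf Hh eps Heps.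
  set (e1 := eps / 2 / (Rabs k + 1)).
  assert (Hk1 : 0 < Rabs k + 1) by (pose proof (Rabs_pos k); lra).
  assert (He1 : 0 < e1) by (unfold e1; apply Rdiv_lt_0_compat; lra).
  assert (Hke1 : Rabs k * e1 <= eps / 2).
  { replace (eps / 2) with ((Rabs k + 1) * e1) by (unfold e1; field; lra).
    pose proof (Rabs_pos k); nra. }
  destruct (Hf e1 He1) as [d1 [Hd1 H1]].
  destruct (right_cont_of_continuity h t Hh (eps / 2)) as [d2 [Hd2 H2]]; [lra|].
  exists (Rmin d1 d2); split; [apply Rmin_pos; lra|].
  intros s Hs. pose proof (Rmin_l d1 d2). pose proof (Rmin_r d1 d2).
  specialize (H1 s ltac:(lra)). specialize (H2 s ltac:(lra)).
  replace (k * f s + h s - (k * f t + h t)) with (k * (f s - f t) + (h s - h t)) by ring.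
  eapply Rle_lt_trans; [apply Rabs_triang|]. rewrite Rabs_mult.
  assert (Rabs k * Rabs (f s - f t) <= Rabs k * e1)
    by (apply Rmult_le_compat_l; [apply Rabs_pos| lra]).
  lra.
Qed.

(* A function with a one-sided derivative on the half-line is right-continuous:
   near t, |f s - f t| is at most (|d| + 1) (s - t). *)
Lemma right_cont_of_deriv_halfline (f : R -> R) (t d : R) :
  0 <= t -> has_deriv_halfline f t d -> right_cont f t.
Proof.
  intros Ht Hd eps Heps.
  destruct (Hd 1 ltac:(lra)) as [alp [Halp Hnear]].
  assert (Hd1 : 0 < Rabs d + 1) by (pose proof (Rabs_pos d); lra).
  set (r := eps / (Rabs d + 1)).
  assert (Hr : 0 < r) by (apply Rdiv_lt_0_compat; lra).
  exists (Rmin alp r); split; [apply Rmin_pos; lra|].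
  intros s Hs. pose proof (Rmin_l alp r). pose proof (Rmin_r alp r).
  destruct (Req_dec s t) as [->|Hne].
  { rewrite Rminus_eq_0, Rabs_R0; lra. }
  set (q := (f s - f t) / (s - t)).
  assert (Hq : Rabs (q - d) < 1).
  { apply (Hnear s). split; [split; lra|]. simpl; unfold R_dist. rewrite Rabs_right; lra. }
  assert (Hq1 : Rabs q <= Rabs d + 1).
  { replace q with ((q - d) + d) by ring. pose proof (Rabs_triang (q - d) d). lra. }
  replace (f s - f t) with (q * (s - t)) by (unfold q; field; lra).
  rewrite Rabs_mult, (Rabs_right (s - t)) by lra.
  assert ((Rabs d + 1) * (s - t) < eps).
  { replace eps with ((Rabs d + 1) * r) by (unfold r; field; lra). nra. }
  assert (Rabs q * (s - t) <= (Rabs d + 1) * (s - t)) by (apply Rmult_le_compat_r; lra).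
  lra.
Qed.

Lemma derivable_of_deriv_halfline (f : R -> R) (t d : R) :
  0 < t -> has_deriv_halfline f t d -> derivable_pt_lim f t d.
Proof.
  intros Ht Hd eps Heps.
  destruct (Hd eps Heps) as [alp [Halp Hnear]].
  assert (Hpos : 0 < Rmin alp t) by (apply Rmin_pos; lra).
  exists (mkposreal _ Hpos). intros h Hh0 Hh. simpl in Hh.
  pose proof (Rmin_l alp t). pose proof (Rmin_r alp t).
  pose proof (Rabs_def2 _ _ Hh).
  specialize (Hnear (t + h)). simpl in Hnear. unfold R_dist in Hnear.
  replace (t + h - t) with h in Hnear by ring.
  apply Hnear. split; [split; lra| lra].
Qed.

Lemma last_nonpos_time (f : R -> R) (t0 t1 : R) :
  (forall t, t0 < t -> continuity_pt f t) ->
  f t0 <= 0 -> t0 <= t1 -> 0 < f t1 ->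
  exists m, t0 <= m < t1 /\ f m <= 0 /\ forall s, m < s <= t1 -> 0 < f s.
Proof.
  intros Hcont H0 Ht Hpos.
  set (S := fun s => t0 <= s <= t1 /\ f s <= 0).
  destruct (completeness S) as [m [Hub Hlub]].
  { exists t1. intros x [[_ ?] _]; auto. }
  { exists t0. unfold S; lra. }
  assert (Hm0 : t0 <= m) by (apply Hub; unfold S; lra).
  assert (Hm1 : m <= t1) by (apply Hlub; intros x [[_ ?] _]; auto).
  (* f (m) <= 0: otherwise f stays positive on a left neighbourhood of m,
     and that neighbourhood would contain no point of S *)
  assert (Hfm : f m <= 0).
  { destruct (Req_dec m t0) as [->|Hne]; auto.
    apply Rnot_lt_le; intro Hfp.
    destruct (Hcont m ltac:(lra) (f m) Hfp) as [alp [Halp Hnear]].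
    set (eta := Rmin alp (m - t0) / 2).
    assert (Heta : 0 < eta) by (unfold eta; apply Rdiv_lt_0_compat; [apply Rmin_pos|]; lra).
    assert (eta < alp) by (unfold eta; pose proof (Rmin_l alp (m - t0)); lra).
    assert (Hbound : forall s, S s -> s <= m - eta).
    { intros s Ss. apply Rnot_lt_le; intro Hs.
      assert (s <= m) by (apply Hub; auto).
      destruct Ss as [_ Hfs].
      destruct (Req_dec s m) as [->|Hsm]; [lra|].
      assert (Hclose : Rabs (f s - f m) < f m).
      { apply Hnear. split; [split; [exact I| auto]|].
        simpl; unfold R_dist. rewrite Rabs_left; lra. }
      apply Rabs_def2 in Hclose. lra. }
    assert (m <= m - eta) by (apply Hlub; exact Hbound). lra. }
  exists m. split; [|split; auto].
  - split; auto. destruct (Req_dec m t1) as [->|]; lra.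
  - intros s Hs. apply Rnot_le_lt; intro Hfs.
    assert (s <= m) by (apply Hub; unfold S; split; lra). lra.
Qed.

Lemma nonpos_propagates (f f' : R -> R) (t0 t1 : R) :
  (forall t, t0 < t -> derivable_pt_lim f t (f' t)) ->
  right_cont f t0 ->
  (forall t, t0 < t -> 0 < f t -> f' t <= 0) ->
  f t0 <= 0 -> t0 <= t1 -> f t1 <= 0.
Proof.
  intros Hd Hrc Hsign H0 Ht.
  apply Rnot_lt_le; intro Hpos.
  assert (Hcont : forall t, t0 < t -> continuity_pt f t)
    by (intros t Htt; exact (derivable_continuous_pt _ _ (exist _ (f' t) (Hd t Htt)))).
  destruct (last_nonpos_time f t0 t1 Hcont H0 Ht Hpos) as [m [Hm [Hfm Hafter]]].
  assert (Hrcm : right_cont f m).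
  { destruct (Req_dec m t0) as [->|]; auto. apply right_cont_of_continuity, Hcont; lra. }
  (* pick u slightly after m with f u < f t1, then apply the mean value theorem on [u, t1] *)
  destruct (Hrcm (f t1 - f m) ltac:(lra)) as [del [Hdel Hnear]].
  set (u := m + Rmin del (t1 - m) / 2).
  assert (0 < Rmin del (t1 - m)) by (apply Rmin_pos; lra).
  pose proof (Rmin_l del (t1 - m)). pose proof (Rmin_r del (t1 - m)).
  assert (Hu : m < u < t1) by (unfold u; lra).
  assert (Hfu : f u < f t1).
  { pose proof (Rabs_def2 _ _ (Hnear u ltac:(unfold u; lra))). lra. }
  destruct (MVT_cor2 f f' u t1) as [w [Hmvt Hw]]; [lra| intros; apply Hd; lra|].
  assert (f' w <= 0) by (apply Hsign; [lra| apply Hafter; lra]).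
  assert (f' w * (t1 - u) <= 0) by nra.
  lra.
Qed.

Section Comparison.

Variables y F : R -> R.
Hypothesis y_deriv : forall t, 0 <= t -> has_deriv_halfline y t (F t).

Lemma barrier_along_solution (k : R) (h h' : R -> R) (t0 t : R) :
  0 <= t0 <= t -> (forall s, is_derive h s (h' s)) ->
  k * y t0 + h t0 <= 0 ->
  (forall s, t0 < s -> 0 < k * y s + h s -> k * F s + h' s <= 0) ->
  k * y t + h t <= 0.
Proof.
  intros Ht Hh H0 Hsign.
  apply (nonpos_propagates (fun s => k * y s + h s) (fun s => k * F s + h' s) t0 t);
    [| |exact Hsign|exact H0|lra].
  - intros s Hs. apply is_derive_Reals.
    apply (is_derive_plus (fun s => k * y s) h s (k * F s) (h' s)); [|apply Hh].
    apply (is_derive_scal y s k (F s)).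
    apply is_derive_Reals, derivable_of_deriv_halfline, y_deriv; lra.
  - apply right_cont_lin_comb.
    + apply (right_cont_of_deriv_halfline y t0 (F t0)); [lra| apply y_deriv; lra].
    + exact (derivable_continuous_pt _ _ (exist _ (h' t0) (proj1 (is_derive_Reals _ _ _) (Hh t0)))).
Qed.

Lemma solution_stays_below (w w' : R -> R) (t0 t : R) :
  0 <= t0 <= t -> (forall s, is_derive w s (w' s)) -> y t0 <= w t0 ->
  (forall s, t0 < s -> w s < y s -> F s <= w' s) -> y t <= w t.
Proof.
  intros Ht Hw H0 Hsign.
  assert (1 * y t + - w t <= 0); [|lra].
  apply (barrier_along_solution 1 (fun s => - w s) (fun s => - w' s) t0 t Ht).
  - intros s. apply (is_derive_opp w s (w' s)), Hw.
  - lra.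
  - intros s Hs Hpos. pose proof (Hsign s Hs ltac:(lra)). lra.
Qed.

Lemma solution_stays_above (w w' : R -> R) (t0 t : R) :
  0 <= t0 <= t -> (forall s, is_derive w s (w' s)) -> w t0 <= y t0 ->
  (forall s, t0 < s -> y s < w s -> w' s <= F s) -> w t <= y t.
Proof.
  intros Ht Hw H0 Hsign.
  assert (-1 * y t + w t <= 0); [|lra].
  apply (barrier_along_solution (-1) w w' t0 t Ht Hw).
  - lra.
  - intros s Hs Hpos. pose proof (Hsign s Hs ltac:(lra)). lra.
Qed.

End Comparison.

Lemma exp_le_mono (x z : R) : x <= z -> exp x <= exp z.
Proof. intros [H| ->]; [left; apply exp_increasing; exact H| lra]. Qed.

Lemma exp_tail_eventually_small (C c beta : R) :
  0 < C -> 0 < c -> 0 < beta ->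
  exists T, 0 <= T /\ forall t, T <= t -> C / c * exp (- c * t) <= beta.
Proof.
  intros HC Hc Hb.
  exists (C / (c * c * beta)). split.
  { apply Rlt_le, Rdiv_lt_0_compat; [lra|]. apply Rmult_lt_0_compat; nra. }
  intros t Ht.
  (* e^(ct) >= ct >= C / (c beta) *)
  assert (Hct : C / (c * beta) <= c * t).
  { replace (C / (c * beta)) with (c * (C / (c * c * beta))) by (field; lra).
    apply Rmult_le_compat_l; lra. }
  pose proof (exp_ineq1_le (c * t)) as Hexp.
  rewrite Ropp_mult_distr_l_reverse, exp_Ropp.
  pose proof (exp_pos (c * t)).
  replace (C / c * / exp (c * t)) with ((C / (c * beta)) * beta / exp (c * t)) by (field; lra).
  apply Rle_trans with (exp (c * t) * beta / exp (c * t)); [|right; field; lra].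
  unfold Rdiv. apply Rmult_le_compat_r; [left; apply Rinv_0_lt_compat; lra|].
  apply Rmult_le_compat_r; lra.
Qed.

Lemma exp_bound_from_eventual (g : R -> R) (A B delta t1 : R) :
  0 < A -> 0 <= B -> 0 < delta ->
  (forall t, t1 <= t -> Rabs (g t) <= A * exp (- delta * t)) ->
  (forall t, 0 <= t <= t1 -> Rabs (g t) <= B) ->
  exists C', 0 < C' /\ forall t, 0 <= t -> Rabs (g t) <= C' * exp (- delta * t).
Proof.
  intros HA HB Hd Hlate Hearly.
  pose proof (Rmax_l A (B * exp (delta * t1))). pose proof (Rmax_r A (B * exp (delta * t1))).
  set (C' := Rmax A (B * exp (delta * t1))) in *.
  exists C'. split; [lra|].
  intros t Ht. pose proof (exp_pos (- delta * t)).
  destruct (Rle_or_lt t1 t) as [Hlt|Hlt].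
  - pose proof (Hlate t Hlt). nra.
  - (* on [0, t1]: B <= B e^(delta t1) e^(-delta t) *)
    pose proof (Hearly t ltac:(lra)).
    assert (1 <= exp (delta * t1) * exp (- delta * t)).
    { rewrite <- exp_plus. pose proof (exp_ineq1_le (delta * t1 + - delta * t)). nra. }
    nra.
Qed.

Lemma tends_to_zero_or_recurrent (y : R -> R) :
  is_lim y p_infty (Finite 0) \/
  exists e0, 0 < e0 /\ forall T, exists t, T < t /\ e0 <= Rabs (y t).
Proof.
  destruct (classic (exists e0, 0 < e0 /\ forall T, exists t, T < t /\ e0 <= Rabs (y t)))
    as [Hrec|Hnrec]; [right; exact Hrec| left].
  apply is_lim_spec. intros [eps Heps]. simpl.
  apply NNPP; intro Hno. apply Hnrec. exists eps. split; [exact Heps|].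
  intro T. apply NNPP; intro HnoT. apply Hno. exists T. intros t Ht.
  rewrite Rminus_0_r. apply Rnot_le_lt; intro Hbig. apply HnoT. exists t; auto.
Qed.

Section LogisticWithDecayingForcing.

Variables p sigma thetabar C c : R.
Variables E y : R -> R.
Hypothesis p_pos : 0 < p.
Hypothesis sigma_pos : 0 < sigma.
Hypothesis thetabar_pos : 0 < thetabar.
Hypothesis C_pos : 0 < C.
Hypothesis c_pos : 0 < c.
Hypothesis E_small : forall t, 0 <= t -> Rabs (E t) <= C * exp (- c * t).
Hypothesis y_nonneg : forall t, 0 <= t -> 0 <= y t.
Hypothesis y_deriv : forall t, 0 <= t ->
  has_deriv_halfline y t (p * sigma * y t * (thetabar - y t) + E t).

Lemma forcing_bounds (t : R) :
  0 <= t -> - (C * exp (- c * t)) <= E t <= C * exp (- c * t).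
Proof. intros Ht. pose proof (E_small t Ht). apply Rabs_le_between; assumption. Qed.

Lemma forcing_tail_deriv (K sign s : R) :
  is_derive (fun u => K + sign * (C / c * exp (- c * u))) s
            (- sign * (C * exp (- c * s))).
Proof. auto_derive; [easy| field; lra]. Qed.

(* The solution is bounded above: above thetabar the logistic term is
   non-positive, so y grows at most by the total forcing C/c. *)
Lemma solution_bounded_above :
  exists M, thetabar <= M /\ forall t, 0 <= t -> y t <= M.
Proof.
  set (M := Rmax (thetabar + C / c) (y 0 + C / c)).
  assert (HM1 : thetabar + C / c <= M) by apply Rmax_l.
  assert (HM2 : y 0 + C / c <= M) by apply Rmax_r.
  assert (Hcc : 0 < C / c) by (apply Rdiv_lt_0_compat; lra).
  exists M. split; [lra|]. intros t Ht.
  assert (Hw : y t <= M + -1 * (C / c * exp (- c * t))).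
  { apply (solution_stays_below y _ y_deriv _ _ 0 t ltac:(lra)
             (fun s => forcing_tail_deriv M (-1) s)).
    - replace (- c * 0) with 0 by ring. rewrite exp_0. lra.
    - intros s Hs Habove.
      assert (exp (- c * s) <= 1) by (rewrite <- exp_0; apply exp_le_mono; nra).
      assert (thetabar < y s) by nra.
      assert (p * sigma * y s * (thetabar - y s) <= 0).
      { pose proof (y_nonneg s ltac:(lra)).
        assert (0 <= p * sigma * y s) by (repeat apply Rmult_le_pos; lra). nra. }
      pose proof (forcing_bounds s ltac:(lra)). lra. }
  pose proof (exp_pos (- c * t)). nra.
Qed.

(* A lower bound K propagates from time t1 on, as long as K plus the remaining
   forcing stays below thetabar, where the logistic term is non-negative. *)
Lemma lower_bound_persists (t1 K : R) :
  0 <= t1 ->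
  (forall s, t1 <= s -> K + C / c * exp (- c * s) <= thetabar) ->
  K + C / c * exp (- c * t1) <= y t1 ->
  forall t, t1 <= t -> K <= y t.
Proof.
  intros Ht1 Hroom Hstart t Ht.
  assert (Hw : K + 1 * (C / c * exp (- c * t)) <= y t).
  { apply (solution_stays_above y _ y_deriv _ _ t1 t ltac:(lra)
             (fun s => forcing_tail_deriv K 1 s)); [lra|].
    intros s Hs Hbelow.
    pose proof (Hroom s ltac:(lra)). pose proof (y_nonneg s ltac:(lra)).
    assert (0 <= p * sigma * y s * (thetabar - y s)).
    { assert (0 <= p * sigma * y s) by (repeat apply Rmult_le_pos; lra). nra. }
    pose proof (forcing_bounds s ltac:(lra)). lra. }
  assert (0 < C / c * exp (- c * t))
    by (apply Rmult_lt_0_compat; [apply Rdiv_lt_0_compat; lra| apply exp_pos]).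
  lra.
Qed.


(* If y returns above e0 at arbitrarily late times, it is eventually bounded
   below by a positive constant: wait until the remaining forcing is below
   e0/2 and thetabar/2, then use the persistence of lower bounds. *)
Lemma eventually_bounded_below (e0 : R) :
  0 < e0 -> (forall T, exists t, T < t /\ e0 <= Rabs (y t)) ->
  exists t1 K, 0 <= t1 /\ 0 < K /\ forall t, t1 <= t -> K <= y t.
Proof.
  intros He0 Hrec.
  set (beta := Rmin (e0 / 2) (thetabar / 2)).
  assert (beta <= e0 / 2) by apply Rmin_l.
  assert (beta <= thetabar / 2) by apply Rmin_r.
  assert (Hbeta : 0 < beta) by (apply Rmin_pos; lra).
  destruct (exp_tail_eventually_small C c beta C_pos c_pos Hbeta) as [T [HT Htail]].
  destruct (Hrec T) as [t1 [Ht1 Hy1]].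
  rewrite Rabs_right in Hy1 by (apply Rle_ge, y_nonneg; lra).
  pose proof (Htail t1 ltac:(lra)).
  set (K := Rmin (y t1 - C / c * exp (- c * t1)) (thetabar / 2)).
  assert (K <= y t1 - C / c * exp (- c * t1)) by apply Rmin_l.
  assert (K <= thetabar / 2) by apply Rmin_r.
  exists t1, K. split; [lra| split; [apply Rmin_pos; lra|]].
  apply lower_bound_persists; [lra| |lra].
  intros s Hs. pose proof (Htail s ltac:(lra)). lra.
Qed.

(* Once y >= K > 0, the logistic term pulls y towards thetabar at rate
   p sigma K; a tube thetabar -/+ A e^(-delta t) is invariant as soon as the
   forcing is dominated by the excess rate (p sigma K - delta) on the tube width. *)
Lemma tube_lower (t1 K A delta : R) :
  0 <= t1 -> 0 < K -> 0 < A ->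
  (forall t, t1 <= t -> K <= y t) ->
  (forall s, t1 <= s -> C * exp (- c * s) <= (p * sigma * K - delta) * (A * exp (- delta * s))) ->
  thetabar - A * exp (- delta * t1) <= y t1 ->
  forall t, t1 <= t -> thetabar - A * exp (- delta * t) <= y t.
Proof.
  intros Ht1 HK HA Hlow Hdom Hstart t Ht.
  apply (solution_stays_above y _ y_deriv (fun s => thetabar - A * exp (- delta * s))
    (fun s => delta * (A * exp (- delta * s))) t1 t);
    [lra| intros s; auto_derive; [easy| ring]| exact Hstart|].
  intros s Hs Hbelow.
  pose proof (Hlow s ltac:(lra)). pose proof (Hdom s ltac:(lra)).
  pose proof (forcing_bounds s ltac:(lra)).
  set (phi := A * exp (- delta * s)) in *.
  (* y (thetabar - y) >= K phi since y >= K and thetabar - y > phi > 0 *)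
  assert (0 < phi) by (unfold phi; pose proof (exp_pos (- delta * s)); nra).
  assert (Hlog : p * sigma * K * phi <= p * sigma * y s * (thetabar - y s)).
  { assert (0 < p * sigma) by nra.
    assert (K * phi <= y s * (thetabar - y s)) by nra. nra. }
  lra.
Qed.

Lemma tube_upper (t1 K A delta : R) :
  0 <= t1 -> 0 < K -> 0 < A ->
  (forall t, t1 <= t -> K <= y t) ->
  (forall s, t1 <= s -> C * exp (- c * s) <= (p * sigma * K - delta) * (A * exp (- delta * s))) ->
  y t1 <= thetabar + A * exp (- delta * t1) ->
  forall t, t1 <= t -> y t <= thetabar + A * exp (- delta * t).
Proof.
  intros Ht1 HK HA Hlow Hdom Hstart t Ht.
  apply (solution_stays_below y _ y_deriv (fun s => thetabar + A * exp (- delta * s))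
    (fun s => - delta * (A * exp (- delta * s))) t1 t);
    [lra| intros s; auto_derive; [easy| ring]| exact Hstart|].
  intros s Hs Habove.
  pose proof (Hlow s ltac:(lra)). pose proof (Hdom s ltac:(lra)).
  pose proof (forcing_bounds s ltac:(lra)).
  set (phi := A * exp (- delta * s)) in *.
  assert (0 < phi) by (unfold phi; pose proof (exp_pos (- delta * s)); nra).
  assert (Hlog : p * sigma * y s * (thetabar - y s) <= - (p * sigma * K * phi)).
  { assert (0 < p * sigma) by nra.
    assert (K * phi <= y s * (y s - thetabar)) by nra. nra. }
  lra.
Qed.

(* Exponential convergence to thetabar from the time y is bounded below:
   take delta = min(c, p sigma K / 2) and A large enough both to dominate the
   forcing and to contain the value at t1. *)
Lemma exp_convergence_from (t1 K : R) :
  0 <= t1 -> 0 < K -> (forall t, t1 <= t -> K <= y t) ->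
  exists A delta, 0 < A /\ 0 < delta /\
    forall t, t1 <= t -> Rabs (y t - thetabar) <= A * exp (- delta * t).
Proof.
  intros Ht1 HK Hlow.
  set (a := p * sigma * K).
  assert (Ha : 0 < a) by (unfold a; repeat apply Rmult_lt_0_compat; lra).
  set (delta := Rmin c (a / 2)).
  assert (delta <= c) by apply Rmin_l.
  assert (delta <= a / 2) by apply Rmin_r.
  assert (0 < delta) by (apply Rmin_pos; lra).
  set (z1 := Rabs (y t1 - thetabar)).
  set (A := Rmax (2 * C / a) (z1 * exp (delta * t1))).
  assert (HA1 : 2 * C / a <= A) by apply Rmax_l.
  assert (HA2 : z1 * exp (delta * t1) <= A) by apply Rmax_r.
  assert (0 < 2 * C / a) by (apply Rdiv_lt_0_compat; lra).
  assert (Hdom : forall s, t1 <= s ->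
            C * exp (- c * s) <= (p * sigma * K - delta) * (A * exp (- delta * s))).
  { intros s Hs. fold a.
    assert (C <= (a - delta) * A).
    { assert (a / 2 * (2 * C / a) = C) by (field; lra). nra. }
    assert (exp (- c * s) <= exp (- delta * s)) by (apply exp_le_mono; nra).
    pose proof (exp_pos (- c * s)). nra. }
  assert (Hinit : z1 <= A * exp (- delta * t1)).
  { assert (Hone : exp (delta * t1) * exp (- delta * t1) = 1).
    { rewrite <- exp_plus, <- exp_0. f_equal. ring. }
    pose proof (exp_pos (- delta * t1)).
    replace z1 with (z1 * exp (delta * t1) * exp (- delta * t1))
      by (rewrite Rmult_assoc, Hone; ring).
    nra. }
  exists A, delta. split; [lra| split; [lra|]].
  intros t Ht. apply Rabs_le. split.
  - assert (thetabar - A * exp (- delta * t) <= y t); [|lra].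
    apply (tube_lower t1 K); auto; try lra.
    unfold z1 in Hinit. pose proof (Rle_abs (- (y t1 - thetabar))).
    rewrite Rabs_Ropp in *. lra.
  - assert (y t <= thetabar + A * exp (- delta * t)); [|lra].
    apply (tube_upper t1 K); auto; try lra.
    unfold z1 in Hinit. pose proof (Rle_abs (y t1 - thetabar)). lra.
Qed.

End LogisticWithDecayingForcing.

Theorem lemma3p2 (p sigma thetabar : R) (E y : R -> R) :
  0 < p -> 0 < sigma -> 0 < thetabar ->
  (forall t, 0 <= t -> cont_halfline E t) ->
  (exists C c, 0 < C /\ 0 < c /\ forall t, 0 <= t -> Rabs (E t) <= C * exp (- c * t)) ->
  (forall t, 0 <= t -> 0 <= y t) ->
  (forall t, 0 <= t ->
     has_deriv_halfline y t (p * sigma * y t * (thetabar - y t) + E t)) ->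
  (forall t, 0 <= t -> cont_halfline (fun s => p * sigma * y s * (thetabar - y s) + E s) t) ->
  is_lim y p_infty (Finite 0) \/
  (exists C' delta, 0 < C' /\ 0 < delta /\
     forall t, 0 <= t -> Rabs (y t - thetabar) <= C' * exp (- delta * t)).
Proof.
  intros Hp Hsigma Htheta _ [C [c [HC [Hc HE]]]] Hy0 Hyd _.
  destruct (tends_to_zero_or_recurrent y) as [Hzero | [e0 [He0 Hrec]]];
    [left; exact Hzero| right].
  destruct (eventually_bounded_below p sigma thetabar C c E y) with (e0 := e0)
    as [t1 [K [Ht1 [HK Hlow]]]]; auto.
  destruct (exp_convergence_from p sigma thetabar C c E y) with (t1 := t1) (K := K)
    as [A [delta [HA [Hdelta Hlate]]]]; auto.
  destruct (solution_bounded_above p sigma thetabar C c E y) as [M [HM Hup]]; auto.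
  (* on [0, t1] the bounds 0 <= y <= M give |y - thetabar| <= M *)
  destruct (exp_bound_from_eventual (fun t => y t - thetabar) A M delta t1 HA
              ltac:(lra) Hdelta Hlate) as [C' [HC' Hbound]].
  - intros t Ht. pose proof (Hup t ltac:(lra)). pose proof (Hy0 t ltac:(lra)).
    apply Rabs_le. lra.
  - exists C', delta. auto.
Qed.
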